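(* Let $\Sigma$ be a set and let $1\leq p<\infty$. Suppose $d$ is a separating quasi-metric on $\Sigma$ and $\gamma,\delta\in\Gamma_{\mathrm{CL}}(\Sigma)$ are composition-length gap penalties such that for all $a,b\in\Sigma$, \[\gamma(b)-\gamma(a)\leq d^p(a,b)\quad\text{and}\quad \delta(a)-\delta(b)\leq d^p(a,b).\] Let $\alpha=\gamma^{1/p}$ and $\beta=\delta^{1/p}$. Then the $\ell^p$ edit distance $D$ on $\Sigma^*$ extending $d$, $\alpha$ and $\beta$ is a separating quasi-metric on $\Sigma^*$.
   Context: $\Sigma^*$ is the free monoid on $\Sigma$ (finite words, operation concatenation, identity the empty word $e$), and $\Sigma^+=\Sigma^*\setminus\{e\}$. For $w=w_1\cdots w_n$ ($w_i\in\Sigma$) write $|w|=n$, $\bar w_k=w_1\cdots w_k$ and $\bar w_0=e$. A quasi-metric on a set $X$ is a map $q:X\times X\to\mathbb{R}_{\ge0}$ with $q(x,y)=q(y,x)=0\iff x=y$ and $q(x,z)\le q(x,y)+q(y,z)$; it is separating if $q(x,y)=0$ implies $x=y$. A gap penalty over $\Sigma^+$ is a positive function $\gamma:\Sigma^+\to\mathbb{R}$ with $\gamma(u)+\gamma(v)\ge\gamma(uv)$ for all $u,v\in\Sigma^+$; $\Gamma(\Sigma)$ denotes the set of these. A function $\gamma$ is increasing if $\gamma(uxv)\ge\gamma(uv)$ for all $u,v,x\in\Sigma^*$. A composition-length gap penalty is an increasing $\gamma\in\Gamma(\Sigma)$ of the form $\gamma(z)=\sum_i\phi(z_i)+\psi(|z|)$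 for all $z\in\Sigma^+$, for some $\phi:\Sigma\to\mathbb{R}$ and $\psi:\mathbb{N}\to\mathbb{R}$; $\Gamma_{\mathrm{CL}}(\Sigma)$ denotes the set of these. $\ell^p$ edit distance: given $d:\Sigma\times\Sigma\to\mathbb{R}$, $1\le p<\infty$, and $\alpha,\beta:\Sigma^+\to\mathbb{R}$ with $\alpha^p,\beta^p\in\Gamma(\Sigma)$, for $x,y\in\Sigma^*$ with $m=|x|$, $n=|y|$ define recursively $D(e,e)=0$, $D(e,\bar y_j)=\alpha(\bar y_j)$ ($1\le j\le n$), $D(\bar x_i,e)=\beta(\bar x_i)$ ($1\le i\le m$), and for $1\le i\le m$, $1\le j\le n$, \[D(\bar x_i,\bar y_j)=\Big(\min\Big\{D^p(\bar x_{i-1},\bar y_{j-1})+d^p(x_i,y_j),\ \min_{1\le k\le j}\{D^p(\bar x_i,\bar y_{j-k})+\alpha^p(y_{j-k+1}\cdots y_j)\},\ \min_{1\le k\le i}\{D^p(\bar x_{i-k},\bar y_j)+\beta^p(x_{i-k+1}\cdots x_i)\}\Big\}\Big)^{1/p},\] and set $D(x,y)=D(\bar x_m,\bar y_n)$. *)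

From HB Require Import structures.
From mathcomp Require Import all_boot all_order all_algebra.
From mathcomp Require Import all_classical all_reals exp.
Set Implicit Arguments. Unset Strict Implicit. Unset Printing Implicit Defensive.
Import Order.TTheory GRing.Theory Num.Theory.
Local Open Scope ring_scope.

Section Defs.
Variable R : realType.

Definition quasi_metric (X : Type) (q : X -> X -> R) : Prop :=
  (forall x y, 0 <= q x y) /\
  (forall x y, (q x y = 0 /\ q y x = 0) <-> x = y) /\
  (forall x y z, q x z <= q x y + q y z).

Definition separating (X : Type) (q : X -> X -> R) : Prop :=
  forall x y, q x y = 0 -> x = y.

Variable S : Type.

Definition gap_penalty (g : seq S -> R) : Prop :=
  (forall z, z <> [::] -> 0 < g z) /\
  (forall u v, u <> [::] -> v <> [::] -> g (u ++ v) <= g u + g v).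

(* increasing (only meaningful when u v is nonempty, g being defined on S^+) *)
Definition increasing_gp (g : seq S -> R) : Prop :=
  forall u x v, u ++ v <> [::] -> g (u ++ v) <= g (u ++ x ++ v).

Definition CL_gap_penalty (g : seq S -> R) : Prop :=
  gap_penalty g /\ increasing_gp g /\
  exists (phi : S -> R) (psi : nat -> R),
    forall z, z <> [::] -> g z = \sum_(a <- z) phi a + psi (size z).

(* l^p edit distance.  [Dfuel n u v] computes D(u, v) (u, v playing the role
   of the prefixes x_i, y_j), by the recursion of the paper; the fuel n only
   has to be at least |u| + |v|. *)
Fixpoint Dfuel (p : R) (d : S -> S -> R) (alpha beta : seq S -> R)
    (n : nat) (u v : seq S) {struct n} : R :=
  match n with
  | 0 => 0
  | n'.+1 =>
    match rev u, rev v with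
    | [::], [::] => 0
    | [::], _ => alpha v
    | _, [::] => beta u
    | a :: ru', b :: rv' =>
      let diag := Dfuel p d alpha beta n' (rev ru') (rev rv') `^ p + d a b `^ p in
      let ins := \big[Order.min/diag]_(1 <= k < (size v).+1)
          (Dfuel p d alpha beta n' u (take (size v - k) v) `^ p
             + alpha (drop (size v - k) v) `^ p) in
      let del := \big[Order.min/diag]_(1 <= k < (size u).+1)
          (Dfuel p d alpha beta n' (take (size u - k) u) v `^ p
             + beta (drop (size u - k) u) `^ p) in
      (Order.min diag (Order.min ins del)) `^ p^-1
    end
  end.

Definition edit_dist (p : R) (d : S -> S -> R) (alpha beta : seq S -> R)
    (x y : seq S) : R :=
  Dfuel p d alpha beta (size x + size y) x y.

End Defs.

From HB Require Import structures.
From mathcomp Require Import all_boot all_order all_algebra.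
From mathcomp Require Import all_classical all_reals exp hoelder.
From mathcomp Require Import zify lra.
Import Order.TTheory GRing.Theory Num.Theory.
Local Open Scope ring_scope.

Set Implicit Arguments. Unset Strict Implicit. Unset Printing Implicit Defensive.

(* Write E = D^p: it obeys the recursion of D additively, with costs d^p,
   gamma and delta.  The triangle inequality is proved by induction on
   |x| + |y| + |z|, looking at the last step of an optimal alignment of y with
   z and, when that is a match, of x with y.  Two final matches are handled by
   Minkowski's inequality in l^p of dimension 2.  Otherwise the alignments are
   reduced to alignments of shorter words such that the excess of E(x, z) is
   bounded by the excesses of E(x, y) and E(y, z), which a second coordinate
   in Minkowski's inequality absorbs.
   The hard case is the deletion of a suffix s of y: the part r of x aligned
   with s must be deletable at cost delta(r) <= delta(s) + (cost of aligning r
   with s).  This is where the composition-length form of delta and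
   delta(a) - delta(b) <= d(a, b)^p enter: matched letters change the phi-sum
   by at most d^p, deleted blocks pay for their length term by subadditivity,
   and letters of s that are inserted are dropped by monotonicity.
   Insertions into z are handled symmetrically. *)

Section PowR.
Variable R : realType.
Implicit Types p t x y : R.

Lemma powRVK p t : 0 < p -> 0 <= t -> (t `^ p^-1) `^ p = t.
Proof. by move=> p0 t0; rewrite -powRrM mulVf ?gt_eqF // powRr1. Qed.

Lemma powRKV p t : 0 < p -> 0 <= t -> (t `^ p) `^ p^-1 = t.
Proof. by move=> p0 t0; rewrite -powRrM mulfV ?gt_eqF // powRr1. Qed.

Lemma ge0_ler_powR2 p x y : 0 < p -> 0 <= x -> 0 <= y ->
  (x `^ p <= y `^ p) = (x <= y).
Proof.
move=> p0 x0 y0; apply/idP/idP => h; last by apply: ge0_ler_powR => //; exact: ltW.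
rewrite -(powRKV p0 x0) -(powRKV p0 y0); apply: ge0_ler_powR => //.
  by rewrite invr_ge0 ltW.
all: by rewrite nnegrE powR_ge0.
Qed.

(* Via Hoelder's inequality with the conjugate exponent q = p / (p - 1). *)
Lemma minkowski2 p a1 a2 b1 b2 : 1 <= p ->
  0 <= a1 -> 0 <= a2 -> 0 <= b1 -> 0 <= b2 ->
  ((a1 + b1) `^ p + (a2 + b2) `^ p) `^ p^-1 <=
  (a1 `^ p + a2 `^ p) `^ p^-1 + (b1 `^ p + b2 `^ p) `^ p^-1.
Proof.
move=> p1 ha1 ha2 hb1 hb2.
have p0 : 0 < p by apply: lt_le_trans p1.
have [->|pn1] := eqVneq p 1.
  by rewrite invr1 !powRr1 ?addr_ge0 // addrACA.
have {pn1} p1' : 1 < p by rewrite lt_neqAle eq_sym pn1.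
set s := (a1 + b1) `^ p + (a2 + b2) `^ p.
have [->|s_neq0] := eqVneq s 0.
  by rewrite powR0 ?invr_eq0 ?gt_eqF // addr_ge0 ?powR_ge0.
have s_gt0 : 0 < s by rewrite lt_neqAle eq_sym s_neq0 addr_ge0 ?powR_ge0.
pose q := p / (p - 1).
have pm0 : 0 < p - 1 by rewrite subr_gt0.
have q0 : 0 < q by rewrite divr_gt0.
have pq1 : p^-1 + q^-1 = 1.
  by rewrite /q invf_div -{1}(div1r p) -mulrDl subrKC mulfV// gt_eqF.
pose c1 := (a1 + b1) `^ (p - 1); pose c2 := (a2 + b2) `^ (p - 1).
have cq x : 0 <= x -> (x `^ (p - 1)) `^ q = x `^ p.
  by move=> hx; rewrite -powRrM /q mulrCA mulfV ?gt_eqF // mulr1.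
have s_split : s = (a1 * c1 + a2 * c2) + (b1 * c1 + b2 * c2).
  rewrite /s /c1 /c2 -(@mulr_powRB1 _ (a1 + b1)) ?addr_ge0 //.
  by rewrite -(@mulr_powRB1 _ (a2 + b2)) ?addr_ge0 // !mulrDl addrACA.
have c_norm : (c1 `^ q + c2 `^ q) `^ q^-1 = s `^ q^-1 by rewrite !cq ?addr_ge0.
have ha := hoelder2 ha1 ha2 (powR_ge0 (a1 + b1) (p - 1)) (powR_ge0 (a2 + b2) (p - 1)) p0 q0 pq1.
have hb := hoelder2 hb1 hb2 (powR_ge0 (a1 + b1) (p - 1)) (powR_ge0 (a2 + b2) (p - 1)) p0 q0 pq1.
rewrite -/c1 -/c2 c_norm in ha hb.
have sq_gt0 : 0 < s `^ q^-1 by rewrite powR_gt0.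
suff : s `^ p^-1 * s `^ q^-1 <=
    ((a1 `^ p + a2 `^ p) `^ p^-1 + (b1 `^ p + b2 `^ p) `^ p^-1) * s `^ q^-1.
  by rewrite ler_pM2r.
rewrite -powRD ?pq1 ?oner_eq0 // powRr1 ?(ltW s_gt0) // {1}s_split mulrDl.
exact: lerD ha hb.
Qed.

Lemma powR_superadd p x y : 1 <= p -> 0 <= x -> 0 <= y ->
  x `^ p + y `^ p <= (x + y) `^ p.
Proof.
move=> p1 x0 y0; have p0 : 0 < p by apply: lt_le_trans p1.
have := minkowski2 p1 x0 (lexx 0) (lexx 0) y0.
rewrite !addr0 !add0r powR0 ?gt_eqF // addr0 add0r (powRKV p0 x0) (powRKV p0 y0) => h.
have ip : 0 < p^-1 by rewrite invr_gt0.
rewrite -(ge0_ler_powR2 ip) ?addr_ge0 ?powR_ge0 //.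
by rewrite (powRKV p0 (addr_ge0 x0 y0)).
Qed.

Lemma minkowski2_le p A B a b X Y Z : 1 <= p ->
  0 <= A -> 0 <= B -> 0 <= a -> 0 <= b -> 0 <= X -> 0 <= Y -> 0 <= Z ->
  X `^ p = A `^ p + a `^ p -> Y `^ p = B `^ p + b `^ p ->
  Z `^ p <= (A + B) `^ p + (a + b) `^ p -> Z <= X + Y.
Proof.
move=> p1 hA hB ha hb hX hY hZ eX eY hz.
have p0 : 0 < p by apply: lt_le_trans p1.
rewrite -(powRKV p0 hZ) -(powRKV p0 hX) -(powRKV p0 hY) eX eY.
apply: le_trans (minkowski2 p1 hA ha hB hb).
apply: ge0_ler_powR => //; first by rewrite invr_ge0 ltW.
all: by rewrite nnegrE ?powR_ge0 ?addr_ge0 ?powR_ge0.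
Qed.

Lemma minkowski2_excess_le p A B X Y Z : 1 <= p ->
  0 <= A -> 0 <= B -> A <= X -> B <= Y -> 0 <= Z ->
  Z `^ p <= (A + B) `^ p + (X `^ p - A `^ p) + (Y `^ p - B `^ p) -> Z <= X + Y.
Proof.
move=> p1 hA hB hAX hBY hZ hz; have p0 : 0 < p by apply: lt_le_trans p1.
have hX : 0 <= X by apply: le_trans hAX.
have hY : 0 <= Y by apply: le_trans hBY.
have root_excess U V : 0 <= V -> V <= U ->
    exists2 c, 0 <= c & c `^ p = U `^ p - V `^ p.
  move=> V0 VU; have U0 : 0 <= U by apply: le_trans VU.
  exists ((U `^ p - V `^ p) `^ p^-1); rewrite ?powR_ge0 // powRVK //.
  by rewrite subr_ge0 ge0_ler_powR2.
have [a a0 ea] := root_excess X A hA hAX.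
have [b b0 eb] := root_excess Y B hB hBY.
apply: (minkowski2_le p1 hA hB a0 b0 hX hY hZ).
- by rewrite ea addrC subrK.
- by rewrite eb addrC subrK.
- apply: le_trans hz _; rewrite -addrA lerD2l -ea -eb.
  exact: powR_superadd.
Qed.

End PowR.

Lemma bigmin_seq_attained d (T : orderType d) (I : eqType) (r : seq I)
    (F : I -> T) x0 :
  \big[Order.min/x0]_(i <- r) F i = x0 \/
  exists2 i, i \in r & \big[Order.min/x0]_(i <- r) F i = F i.
Proof.
elim: r => [|j r IH]; rewrite ?big_nil ?big_cons; first by left.
rewrite minEle; case: ifP => _; first by right; exists j; rewrite ?mem_head.
case: IH => [->|[i ir ->]]; first by left.
by right; exists i => //; rewrite in_cons ir orbT.
Qed.

Lemma rcons_neq_nil (T : Type) (s : seq T) x : rcons s x <> [::].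
Proof. by case: s. Qed.

Lemma neq_nil_size_gt0 (T : Type) (s : seq T) : s <> [::] -> (0 < size s)%N.
Proof. by case: s. Qed.

Lemma cat_eq_cat_suffix (T : Type) (a b c e : seq T) :
  a ++ b = c ++ e -> (size b <= size e)%N -> exists w, a = c ++ w /\ e = w ++ b.
Proof.
elim: c a => [|x c IH] [|y a] /=; try by move=> <- _; eexists.
- by move=> -> /=; rewrite size_cat; lia.
- by case=> -> /IH h /h [w [-> ->]]; exists w.
Qed.

Lemma drop_size_subn_neq_nil (T : Type) (w : seq T) k :
  (0 < k <= size w)%N -> drop (size w - k) w <> [::].
Proof. by move=> hk h; have := size_drop (size w - k) w; rewrite h /=; lia. Qed.

Section EditDistance.
Variables (R : realType) (S : Type) (p : R) (d : S -> S -> R).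
Variables (alpha beta : seq S -> R).
Local Notation Df := (Dfuel p d alpha beta).
Local Notation D := (edit_dist p d alpha beta).

Lemma Dfuel_enough n m u v : (size u + size v <= n)%N -> (size u + size v <= m)%N ->
  Df n u v = Df m u v.
Proof.
elim: n m u v => [|n IH] [|m] u v /= Hn Hm; first by [].
- have /size0nil -> : size u = 0%N by lia.
  by have /size0nil -> : size v = 0%N by lia.
- have /size0nil -> : size u = 0%N by lia.
  by have /size0nil -> : size v = 0%N by lia.
case Eu: (rev u) => [|a ru']; case Ev: (rev v) => [|b rv']; [by []|by []|by []|].
have hu : size u = (size ru').+1 by rewrite -size_rev Eu.
have hv : size v = (size rv').+1 by rewrite -size_rev Ev.
have IHdiag : Df n (rev ru') (rev rv') = Df m (rev ru') (rev rv').
  by apply: IH; rewrite !size_rev; lia.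
rewrite IHdiag; congr (Order.min _ (Order.min _ _) `^ _); apply: eq_big_nat => k /andP[k1 k2].
all: by congr (_ `^ _ + _); apply: IH; rewrite size_takel ?leq_subr //; lia.
Qed.

Lemma edit_dist_nil : D [::] [::] = 0.
Proof. by []. Qed.

Lemma edit_dist_nill v : v <> [::] -> D [::] v = alpha v.
Proof.
case/lastP: v => [//|v b] _; rewrite /edit_dist size_rcons add0n /= rev_rcons.
by case: (rev v).
Qed.

Lemma edit_dist_nilr u : u <> [::] -> D u [::] = beta u.
Proof. by case/lastP: u => [//|u a] _; rewrite /edit_dist size_rcons addn0 /= rev_rcons. Qed.

Lemma edit_dist_rcons u a v b : D (rcons u a) (rcons v b) =
  let diag := D u v `^ p + d a b `^ p in
  (Order.min diag (Order.min
     (\big[Order.min/diag]_(1 <= k < (size v).+2)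
        (D (rcons u a) (take ((size v).+1 - k) (rcons v b)) `^ p
          + alpha (drop ((size v).+1 - k) (rcons v b)) `^ p))
     (\big[Order.min/diag]_(1 <= k < (size u).+2)
        (D (take ((size u).+1 - k) (rcons u a)) (rcons v b) `^ p
          + beta (drop ((size u).+1 - k) (rcons u a)) `^ p)))) `^ p^-1.
Proof.
rewrite {1}/edit_dist !size_rcons addSn /= !rev_rcons !revK size_rcons.
have -> : Df (size u + (size v).+1) u v = D u v.
  by rewrite /edit_dist; apply: Dfuel_enough; lia.
congr (Order.min _ (Order.min _ _) `^ _).
all: rewrite ?size_rcons; apply: eq_big_nat => k /andP[k1 k2].
all: congr (_ `^ _ + _); rewrite /edit_dist; apply: Dfuel_enough;
    rewrite ?size_rcons ?size_takel ?size_rcons ?leq_subr //; lia.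
Qed.

Lemma Dfuel_sym n u v : Df n u v = Dfuel p (fun a b => d b a) beta alpha n v u.
Proof.
elim: n u v => [|n IH] u v /=; first by [].
case: (rev u) => [|a ru']; case: (rev v) => [|b rv']; [by []|by []|by []|].
rewrite IH; congr (Order.min _ _ `^ _); rewrite minC.
by congr Order.min; apply: eq_big_nat => k _; rewrite IH.
Qed.

Lemma edit_dist_sym u v : D u v = edit_dist p (fun a b => d b a) beta alpha v u.
Proof. by rewrite /edit_dist Dfuel_sym addnC. Qed.

End EditDistance.

(* Gap penalties are only constrained on nonempty words. *)
Definition gap0 (R : realType) (S : Type) (g : seq S -> R) (w : seq S) : R :=
  if w is [::] then 0 else g w.

Section GapPenalty.
Variables (R : realType) (S : Type) (g : seq S -> R).

Lemma gap0E w : w <> [::] -> gap0 g w = g w.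
Proof. by case: w. Qed.

Hypothesis g_gp : gap_penalty g.

Lemma gap0_ge0 w : 0 <= gap0 g w.
Proof. by case: w => [|c w] //=; apply/ltW/(proj1 g_gp). Qed.

Lemma gap0_cat u v : gap0 g (u ++ v) <= gap0 g u + gap0 g v.
Proof.
case: u => [|a u]; first by rewrite add0r.
case: v => [|b v]; first by rewrite cats0 addr0.
by apply: (proj2 g_gp).
Qed.

Hypothesis g_incr : increasing_gp g.

Lemma gap0_incr u x v : gap0 g (u ++ v) <= gap0 g (u ++ x ++ v).
Proof.
case Euv: (u ++ v) => [|y w]; first exact: gap0_ge0.
have hne : u ++ x ++ v <> [::].
  by move=> h0; have := f_equal size h0; have := f_equal size Euv; rewrite !size_cat /=; lia.
have := @g_incr u x v; rewrite Euv => /(_ ltac:(discriminate)).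
by move: hne; case: (u ++ x ++ v).
Qed.

Lemma gap0_mask m s : gap0 g (mask m s) <= gap0 g s.
Proof.
suff gen u : gap0 g (u ++ mask m s) <= gap0 g (u ++ s) by exact: (gen [::]).
elim: s u m => [|c s IH] u m; first by rewrite mask0.
case: m => [|[] m] /=.
- by have := gap0_incr u (c :: s) [::]; rewrite !cats0.
- by rewrite -!cat_rcons; exact: IH.
- exact: le_trans (IH u m) (gap0_incr u [:: c] s).
Qed.

End GapPenalty.

Section LpCost.
Variables (R : realType) (S : Type) (p : R) (d : S -> S -> R).
Variables (gamma delta : seq S -> R).
Hypothesis p_ge1 : 1 <= p.
Hypothesis gamma_gp : gap_penalty gamma.
Hypothesis delta_gp : gap_penalty delta.

Let p_gt0 : 0 < p. Proof. exact: lt_le_trans p_ge1. Qed.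
Let gamma_gt0 := proj1 gamma_gp.
Let delta_gt0 := proj1 delta_gp.

Local Notation D := (edit_dist p d (fun z => gamma z `^ p^-1) (fun z => delta z `^ p^-1)).

Definition lp_cost u v := D u v `^ p.
Local Notation E := lp_cost.

Lemma edit_dist_ge0 u v : 0 <= D u v.
Proof.
case/lastP: u => [|u a]; case/lastP: v => [|v b].
- by rewrite edit_dist_nil.
- by rewrite edit_dist_nill ?powR_ge0 //; exact: rcons_neq_nil.
- by rewrite edit_dist_nilr ?powR_ge0 //; exact: rcons_neq_nil.
- by rewrite edit_dist_rcons powR_ge0.
Qed.

Lemma edit_distE u v : D u v = E u v `^ p^-1.
Proof. by rewrite /lp_cost powRKV // edit_dist_ge0. Qed.

Lemma lp_cost_ge0 u v : 0 <= E u v.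
Proof. exact: powR_ge0. Qed.

Lemma lp_cost_nill v : E [::] v = gap0 gamma v.
Proof.
case: v => [|b v]; first by rewrite /lp_cost edit_dist_nil powR0 // gt_eqF.
by rewrite /lp_cost edit_dist_nill // powRVK //; apply/ltW/gamma_gt0.
Qed.

Lemma lp_cost_nilr u : E u [::] = gap0 delta u.
Proof.
case: u => [|a u]; first by rewrite /lp_cost edit_dist_nil powR0 // gt_eqF.
by rewrite /lp_cost edit_dist_nilr // powRVK //; apply/ltW/delta_gt0.
Qed.

Lemma lp_cost_rcons u a v b : E (rcons u a) (rcons v b) =
  let diag := E u v + d a b `^ p in
  Order.min diag (Order.min
    (\big[Order.min/diag]_(1 <= k < (size v).+2)
       (E (rcons u a) (take ((size v).+1 - k) (rcons v b))
         + gamma (drop ((size v).+1 - k) (rcons v b))))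
    (\big[Order.min/diag]_(1 <= k < (size u).+2)
       (E (take ((size u).+1 - k) (rcons u a)) (rcons v b)
         + delta (drop ((size u).+1 - k) (rcons u a))))).
Proof.
have root_gap (g : seq S -> R) w k : (forall z, z <> [::] -> 0 < g z) ->
    (0 < k <= size w)%N -> (g (drop (size w - k) w) `^ p^-1) `^ p = g (drop (size w - k) w).
  by move=> g_gt0 hk; rewrite powRVK //; apply/ltW/g_gt0/drop_size_subn_neq_nil.
rewrite /lp_cost edit_dist_rcons /= powRVK //; last first.
  rewrite le_min addr_ge0 ?powR_ge0 //= le_min.
  by apply/andP; split; apply: le_bigmin => [|k _]; rewrite addr_ge0 ?powR_ge0.
congr (Order.min _ (Order.min _ _)); apply: eq_big_nat => k /andP[k1 k2].
- have hk : (0 < k <= size (rcons v b))%N by rewrite size_rcons k1 -ltnS.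
  by rewrite -(size_rcons v b) root_gap.
- have hk : (0 < k <= size (rcons u a))%N by rewrite size_rcons k1 -ltnS.
  by rewrite -(size_rcons u a) root_gap.
Qed.

Lemma lp_cost_match_le u a v b : E (rcons u a) (rcons v b) <= E u v + d a b `^ p.
Proof. by rewrite lp_cost_rcons ge_min lexx. Qed.

Lemma lp_cost_catl_le u1 u2 v : E (u1 ++ u2) v <= E u1 v + gap0 delta u2.
Proof.
case: u2 => [|c u2]; first by rewrite cats0 addr0.
case/lastP: v => [|v b]; first by rewrite !lp_cost_nilr gap0_cat.
have hw : u1 ++ c :: u2 <> [::] by case: u1.
case/lastP Eu: (u1 ++ c :: u2) hw => [//|u a] _.
have hsize : (size u).+1 = size (u1 ++ c :: u2) by rewrite Eu size_rcons.
rewrite lp_cost_rcons ge_min; apply/orP; right; rewrite ge_min; apply/orP; right.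
apply: (bigmin_inf_seq _ (size (c :: u2))) => //.
  by rewrite mem_index_iota hsize size_cat /=; lia.
by rewrite hsize -Eu size_cat addnK take_size_cat // drop_size_cat.
Qed.

Lemma lp_cost_last_step u v : u ++ v <> [::] -> [\/
  exists u1 u2, [/\ u = u1 ++ u2, u2 <> [::] & E u v = E u1 v + delta u2],
  exists v1 v2, [/\ v = v1 ++ v2, v2 <> [::] & E u v = E u v1 + gamma v2] |
  exists u1 a v1 b, [/\ u = rcons u1 a, v = rcons v1 b & E u v = E u1 v1 + d a b `^ p]].
Proof.
case/lastP: u => [|u a]; case/lastP: v => [|v b] // _.
- apply: Or32; exists [::], (rcons v b); split=> //; first exact: rcons_neq_nil.
  by rewrite !lp_cost_nill add0r gap0E //; exact: rcons_neq_nil.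
- apply: Or31; exists [::], (rcons u a); split=> //; first exact: rcons_neq_nil.
  by rewrite !lp_cost_nilr add0r gap0E //; exact: rcons_neq_nil.
have match_step : exists u1 a' v1 b', [/\ rcons u a = rcons u1 a', rcons v b = rcons v1 b'
    & E u v + d a b `^ p = E u1 v1 + d a' b' `^ p] by exists u, a, v, b.
rewrite lp_cost_rcons /= minEle; case: ifP => _; first exact: Or33.
rewrite minEle; case: ifP => _.
- have [->|[k kin ->]] := bigmin_seq_attained (index_iota 1 (size v).+2)
    (fun k => E (rcons u a) (take ((size v).+1 - k) (rcons v b))
      + gamma (drop ((size v).+1 - k) (rcons v b))) (E u v + d a b `^ p).
    exact: Or33.
  apply: Or32; exists (take ((size v).+1 - k) (rcons v b)), (drop ((size v).+1 - k) (rcons v b)).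
  rewrite cat_take_drop; split=> //; rewrite -(size_rcons v b).
  by apply: drop_size_subn_neq_nil; move: kin; rewrite mem_index_iota size_rcons; lia.
- have [->|[k kin ->]] := bigmin_seq_attained (index_iota 1 (size u).+2)
    (fun k => E (take ((size u).+1 - k) (rcons u a)) (rcons v b)
      + delta (drop ((size u).+1 - k) (rcons u a))) (E u v + d a b `^ p).
    exact: Or33.
  apply: Or31; exists (take ((size u).+1 - k) (rcons u a)), (drop ((size u).+1 - k) (rcons u a)).
  rewrite cat_take_drop; split=> //; rewrite -(size_rcons u a).
  by apply: drop_size_subn_neq_nil; move: kin; rewrite mem_index_iota size_rcons; lia.
Qed.

End LpCost.

Lemma lp_cost_sym (R : realType) (S : Type) (p : R) d (gamma delta : seq S -> R) u v :
  lp_cost p d gamma delta u v = lp_cost p (fun a b => d b a) delta gamma v u.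
Proof. by rewrite /lp_cost edit_dist_sym. Qed.

Lemma lp_cost_catr_le (R : realType) (S : Type) (p : R) (d : S -> S -> R)
    (gamma delta : seq S -> R) (p_ge1 : 1 <= p) (gamma_gp : gap_penalty gamma)
    (delta_gp : gap_penalty delta) u v1 v2 :
  lp_cost p d gamma delta u (v1 ++ v2) <= lp_cost p d gamma delta u v1 + gap0 gamma v2.
Proof. by rewrite !(lp_cost_sym p d); apply: lp_cost_catl_le. Qed.

Section SplitSuffix.
Variables (R : realType) (S : Type) (p : R) (d : S -> S -> R).
Variables (gamma delta : seq S -> R).
Hypothesis p_ge1 : 1 <= p.
Hypothesis gamma_gp : gap_penalty gamma.
Hypothesis gamma_incr : increasing_gp gamma.
Hypothesis delta_CL : CL_gap_penalty delta.
Hypothesis delta_d : forall a b, delta [:: a] - delta [:: b] <= d a b `^ p.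

Let delta_gp := proj1 delta_CL.
Let delta_incr := proj1 (proj2 delta_CL).
Let gamma_gt0 := proj1 gamma_gp.
Let delta_gt0 := proj1 delta_gp.

Local Notation E := (lp_cost p d gamma delta).
Local Notation last_step := (lp_cost_last_step d p_ge1 gamma_gp delta_gp).

Section Composition.
Variables (phi : S -> R) (psi : nat -> R).
Hypothesis delta_sum : forall z, z <> [::] -> delta z = \sum_(a <- z) phi a + psi (size z).

Definition psi0 j := if j is 0 then 0 else psi j.

Lemma gap0_delta_sum w : gap0 delta w = \sum_(a <- w) phi a + psi0 (size w).
Proof. by case: w => [|c w] /=; rewrite ?big_nil ?addr0 // delta_sum. Qed.

Lemma psi0_add (u v : seq S) : psi0 (size u + size v) <= psi0 (size u) + psi0 (size v).
Proof.
have := gap0_cat delta_gp u v.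
rewrite !gap0_delta_sum size_cat big_cat /=; lra.
Qed.

(* The suffix r of x is aligned with s: its letters are matched with the
   letters [mask m s] of s or deleted, as many as there are letters in e. *)
Definition suffix_split x y s := exists x' r m (e : seq S),
  [/\ x = x' ++ r, size m = size s, size r = (size (mask m s) + size e)%N,
    E x' y <= E x (y ++ s) &
    \sum_(a <- r) phi a - \sum_(a <- mask m s) phi a + psi0 (size e)
      <= E x (y ++ s) - E x' y].

Lemma suffix_split_nil x y : suffix_split x y [::].
Proof.
exists x, [::], [::], [::]; rewrite /= !cats0 !big_nil /psi0 !subrr addr0.
by split.
Qed.

Lemma suffix_split_del x1 x2 y s : suffix_split x1 y s -> x2 <> [::] ->
  E (x1 ++ x2) (y ++ s) = E x1 (y ++ s) + delta x2 -> suffix_split (x1 ++ x2) y s.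
Proof.
move=> [x' [r [m [e [-> hm hr hle hsum]]]]] x2_neq_nil eE.
exists x', (r ++ x2), m, (e ++ x2); split=> //.
- by rewrite catA.
- by rewrite !size_cat hr addnA.
- by rewrite eE; apply: le_trans hle _; rewrite lerDl; apply/ltW/delta_gt0.
- have := psi0_add e x2; have := gap0_delta_sum x2; rewrite gap0E // => hx2.
  by rewrite eE big_cat size_cat /=; move: hsum hx2; lra.
Qed.

Lemma suffix_split_ins x y s v : suffix_split x y s -> v <> [::] ->
  E x (y ++ s ++ v) = E x (y ++ s) + gamma v -> suffix_split x y (s ++ v).
Proof.
move=> [x' [r [m [e [-> hm hr hle hsum]]]]] v_neq_nil eE.
have hmask : mask (m ++ nseq (size v) false) (s ++ v) = mask m s.
  by rewrite mask_cat // mask_false cats0.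
exists x', r, (m ++ nseq (size v) false), e; rewrite hmask; split=> //.
- by rewrite !size_cat size_nseq hm.
- by rewrite eE; apply: le_trans hle _; rewrite lerDl; apply/ltW/gamma_gt0.
- by rewrite eE; apply: le_trans hsum _; rewrite lerD2r lerDl; apply/ltW/gamma_gt0.
Qed.

Lemma suffix_split_ins_cover x v w s : w ++ s <> [::] ->
  E x ((v ++ w) ++ s) = E x v + gamma (w ++ s) -> suffix_split x (v ++ w) s.
Proof.
move=> ws_neq_nil eE.
have hle : E x (v ++ w) <= E x ((v ++ w) ++ s).
  rewrite eE; apply: le_trans (lp_cost_catr_le d p_ge1 gamma_gp delta_gp x v w) _.
  rewrite lerD2l; have := gap0_incr gamma_gp gamma_incr w s [::].
  by rewrite !cats0 [gap0 gamma (w ++ s)]gap0E.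
exists x, [::], (nseq (size s) false), [::]; split.
- by rewrite cats0.
- by rewrite size_nseq.
- by rewrite mask_false.
- exact: hle.
- by rewrite mask_false !big_nil /psi0 subrr addr0 subr_ge0.
Qed.

Lemma suffix_split_match x a y s b : suffix_split x y s ->
  E (rcons x a) (rcons (y ++ s) b) = E x (y ++ s) + d a b `^ p ->
  suffix_split (rcons x a) y (rcons s b).
Proof.
move=> [x' [r [m [e [-> hm hr hle hsum]]]]] eE.
have hmask : mask (rcons m true) (rcons s b) = rcons (mask m s) b.
  by rewrite mask_rcons //; exact: cats1.
exists x', (rcons r a), (rcons m true), e; rewrite hmask -!rcons_cat; split.
- by rewrite rcons_cat.
- by rewrite !size_rcons hm.
- by rewrite !size_rcons hr addSn.
- by rewrite eE; apply: le_trans hle _; rewrite lerDl powR_ge0.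
- have := delta_d a b; rewrite !delta_sum // !big_seq1 => hab.
  by rewrite eE -!cats1 !big_cat !big_seq1 /=; move: hsum hab; lra.
Qed.

Lemma suffix_split_all n x y s : (size x + size s < n)%N -> suffix_split x y s.
Proof.
elim: n x y s => [//|n IH] x y s hn.
case/lastP: s hn => [|s b] hn; first exact: suffix_split_nil.
have xys_neq_nil : x ++ y ++ rcons s b <> [::].
  by rewrite -!rcons_cat; exact: rcons_neq_nil.
case: (last_step xys_neq_nil) =>
    [[x1 [x2 [Ex x2_neq_nil eE]]] | [v1 [v2 [Ev v2_neq_nil eE]]] | [x1 [a [v1 [b' [Ex Ev eE]]]]]].
- subst x; apply: (suffix_split_del _ x2_neq_nil eE); apply: IH.
  by move: hn; rewrite size_cat; have := neq_nil_size_gt0 x2_neq_nil; lia.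
- case: (leqP (size (rcons s b)) (size v2)) => hsv.
    have [w [Ey Ev2]] := cat_eq_cat_suffix Ev hsv; subst y v2.
    by apply: suffix_split_ins_cover v2_neq_nil eE.
  have [s2 [Ev1 Es]] := cat_eq_cat_suffix (esym Ev) (ltnW hsv).
  have sp : suffix_split x y s2.
    by apply: IH; move: hn; rewrite Es size_cat; have := neq_nil_size_gt0 v2_neq_nil; lia.
  by rewrite Es; apply: suffix_split_ins sp v2_neq_nil _; rewrite -Es -Ev1.
- subst x; rewrite -rcons_cat in Ev eE; case/rcons_inj: Ev => Ev1 Eb; subst v1 b'.
  apply: (suffix_split_match _ eE); apply: IH.
  by move: hn; rewrite !size_rcons; lia.
Qed.

End Composition.

Lemma lp_cost_split_suffix x y s : exists x' r, [/\ x = x' ++ r,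
  E x' y <= E x (y ++ s) & gap0 delta r <= gap0 delta s + (E x (y ++ s) - E x' y)].
Proof.
have [phi [psi delta_sum]] := proj2 (proj2 delta_CL).
have : suffix_split phi psi x y s.
  by apply: (suffix_split_all delta_sum); exact: ltnSn.
move=> [x' [r [m [e [-> hm hr hle hsum]]]]].
exists x', r; split=> //.
have := gap0_mask delta_gp delta_incr m s; have := psi0_add delta_sum (mask m s) e.
rewrite !(gap0_delta_sum delta_sum) hr; move: hsum; lra.
Qed.

End SplitSuffix.

Section Triangle.
Variables (R : realType) (S : Type) (p : R) (d : S -> S -> R).
Variables (gamma delta : seq S -> R).
Hypothesis p_ge1 : 1 <= p.
Hypothesis d_qm : quasi_metric d.
Hypothesis d_sep : separating d.
Hypothesis gamma_CL : CL_gap_penalty gamma.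
Hypothesis delta_CL : CL_gap_penalty delta.
Hypothesis gamma_d : forall a b, gamma [:: b] - gamma [:: a] <= d a b `^ p.
Hypothesis delta_d : forall a b, delta [:: a] - delta [:: b] <= d a b `^ p.

Let p_gt0 : 0 < p. Proof. exact: lt_le_trans p_ge1. Qed.
Let d_ge0 := proj1 d_qm.
Let d_triangle := proj2 (proj2 d_qm).
Let gamma_gp := proj1 gamma_CL.
Let delta_gp := proj1 delta_CL.
Let gamma_incr := proj1 (proj2 gamma_CL).
Let delta_incr := proj1 (proj2 delta_CL).
Let gamma_gt0 := proj1 gamma_gp.
Let delta_gt0 := proj1 delta_gp.
Let d_refl a : d a a = 0.
Proof. by have [_ /(_ erefl) []] := proj1 (proj2 d_qm) a a. Qed.

Local Notation D := (edit_dist p d (fun z => gamma z `^ p^-1) (fun z => delta z `^ p^-1)).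
Local Notation E := (lp_cost p d gamma delta).
Local Notation E_ge0 := (lp_cost_ge0 p d gamma delta).
Local Notation D_ge0 := (edit_dist_ge0 p d gamma delta).
Local Notation last_step := (lp_cost_last_step d p_ge1 gamma_gp delta_gp).

Lemma lp_cost_split_prefix y s z : exists z' r, [/\ z = z' ++ r,
  E y z' <= E (y ++ s) z & gap0 gamma r <= gap0 gamma s + (E (y ++ s) z - E y z')].
Proof.
have gamma_d' a b : gamma [:: a] - gamma [:: b] <= d b a `^ p by exact: gamma_d.
have flip u v : lp_cost p (fun a b => d b a) delta gamma v u = E u v.
  by rewrite lp_cost_sym.
have [z' [r [Ez hle hr]]] :=
  lp_cost_split_suffix p_ge1 delta_gp delta_incr gamma_CL gamma_d' z y s.
by exists z', r; rewrite !flip in hle hr.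
Qed.

Lemma edit_dist_triangle_reduce x y z x' y' z' :
  D x' z' <= D x' y' + D y' z' -> E x' y' <= E x y -> E y' z' <= E y z ->
  E x z <= E x' z' + (E x y - E x' y') + (E y z - E y' z') ->
  D x z <= D x y + D y z.
Proof.
move=> IH hxy hyz hxz.
have le_D u v u' v' : E u v <= E u' v' -> D u v <= D u' v'.
  by rewrite /lp_cost ge0_ler_powR2 ?D_ge0.
apply: (minkowski2_excess_le p_ge1 (D_ge0 _ _) (D_ge0 _ _) (le_D _ _ _ _ hxy)
  (le_D _ _ _ _ hyz) (D_ge0 _ _)).
have IHp : E x' z' <= (D x' y' + D y' z') `^ p.
  by rewrite /lp_cost ge0_ler_powR2 ?addr_ge0 ?D_ge0.
apply: le_trans hxz _; rewrite /lp_cost in IHp *.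
by rewrite !lerD2r.
Qed.

Lemma edit_dist_triangle_match x a y b z c :
  D x z <= D x y + D y z ->
  E (rcons x a) (rcons y b) = E x y + d a b `^ p ->
  E (rcons y b) (rcons z c) = E y z + d b c `^ p ->
  D (rcons x a) (rcons z c) <= D (rcons x a) (rcons y b) + D (rcons y b) (rcons z c).
Proof.
move=> IH exy eyz.
apply: (minkowski2_le p_ge1 (D_ge0 x y) (D_ge0 y z) (d_ge0 a b) (d_ge0 b c)
  (D_ge0 _ _) (D_ge0 _ _) (D_ge0 _ _) exy eyz).
apply: le_trans (lp_cost_match_le d p_ge1 gamma_gp delta_gp x a z c) _.
by apply: lerD; rewrite /lp_cost ge0_ler_powR2 ?addr_ge0 ?D_ge0.
Qed.

Local Notation below x y z := (forall x' y' z',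
  (size x' + size y' + size z' < size x + size y + size z)%N ->
  D x' z' <= D x' y' + D y' z').

Lemma edit_dist_triangle_del_y x y s z : below x (y ++ s) z -> s <> [::] ->
  E (y ++ s) z = E y z + delta s -> D x z <= D x (y ++ s) + D (y ++ s) z.
Proof.
move=> IH s_neq_nil eE.
have [x' [r [Ex hle hr]]] :=
  lp_cost_split_suffix p_ge1 gamma_gp gamma_incr delta_CL delta_d x y s; subst x.
apply: (edit_dist_triangle_reduce (x' := x') (y' := y) (z' := z)) => //.
- apply: IH; rewrite !size_cat; have := neq_nil_size_gt0 s_neq_nil; lia.
- by rewrite eE lerDl; apply/ltW/delta_gt0.
- have := lp_cost_catl_le d p_ge1 gamma_gp delta_gp x' r z.
  by move: hr eE; rewrite [gap0 delta s]gap0E //; lra.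
Qed.

Lemma edit_dist_triangle_ins_y x y s z : below x (y ++ s) z -> s <> [::] ->
  E x (y ++ s) = E x y + gamma s -> D x z <= D x (y ++ s) + D (y ++ s) z.
Proof.
move=> IH s_neq_nil eE.
have [z' [r [Ez hle hr]]] := lp_cost_split_prefix y s z; subst z.
apply: (edit_dist_triangle_reduce (x' := x) (y' := y) (z' := z')) => //.
- apply: IH; rewrite !size_cat; have := neq_nil_size_gt0 s_neq_nil; lia.
- by rewrite eE lerDl; apply/ltW/gamma_gt0.
- have := lp_cost_catr_le d p_ge1 gamma_gp delta_gp x z' r.
  by move: hr eE; rewrite [gap0 gamma s]gap0E //; lra.
Qed.

Lemma edit_dist_triangle_del_x x1 x2 y z : below (x1 ++ x2) y z -> x2 <> [::] ->
  E (x1 ++ x2) y = E x1 y + delta x2 -> D (x1 ++ x2) z <= D (x1 ++ x2) y + D y z.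
Proof.
move=> IH x2_neq_nil eE.
apply: (edit_dist_triangle_reduce (x' := x1) (y' := y) (z' := z)) => //.
- apply: IH; rewrite size_cat; have := neq_nil_size_gt0 x2_neq_nil; lia.
- by rewrite eE lerDl; apply/ltW/delta_gt0.
- have := lp_cost_catl_le d p_ge1 gamma_gp delta_gp x1 x2 z.
  by move: eE; rewrite gap0E //; lra.
Qed.

Lemma edit_dist_triangle_ins_z x y z1 z2 : below x y (z1 ++ z2) -> z2 <> [::] ->
  E y (z1 ++ z2) = E y z1 + gamma z2 -> D x (z1 ++ z2) <= D x y + D y (z1 ++ z2).
Proof.
move=> IH z2_neq_nil eE.
apply: (edit_dist_triangle_reduce (x' := x) (y' := y) (z' := z1)) => //.
- apply: IH; rewrite size_cat; have := neq_nil_size_gt0 z2_neq_nil; lia.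
- by rewrite eE lerDl; apply/ltW/gamma_gt0.
- have := lp_cost_catr_le d p_ge1 gamma_gp delta_gp x z1 z2.
  by move: eE; rewrite gap0E //; lra.
Qed.

Lemma edit_dist_triangle_match_yz x y b z c : below x (rcons y b) (rcons z c) ->
  E (rcons y b) (rcons z c) = E y z + d b c `^ p ->
  D x (rcons z c) <= D x (rcons y b) + D (rcons y b) (rcons z c).
Proof.
move=> IH eE.
have xy_neq_nil : x ++ rcons y b <> [::] by case: (x) => //; exact: rcons_neq_nil.
case: (last_step xy_neq_nil) => [[x1 [x2 [Ex x2_neq_nil eE']]] | [y' [s [Ey s_neq_nil eE']]]
    | [x1 [a [y1 [b' [Ex Ey eE']]]]]].
- by subst x; apply: edit_dist_triangle_del_x.
- by rewrite Ey in IH eE' *; apply: edit_dist_triangle_ins_y.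
- subst x; case/rcons_inj: Ey => Ey1 Eb; subst y1 b'.
  apply: edit_dist_triangle_match eE' eE; apply: IH.
  by rewrite !size_rcons; lia.
Qed.

Lemma edit_dist_triangle_size n x y z : (size x + size y + size z < n)%N ->
  D x z <= D x y + D y z.
Proof.
elim: n x y z => [//|n IHn] x y z hn.
have IH : below x y z by move=> x' y' z' hs; apply: IHn; lia.
have [yz_nil | yz_neq_nil] : y ++ z = [::] \/ y ++ z <> [::].
  by case: (y ++ z); [left | right].
  have [-> ->] : y = [::] /\ z = [::] by case: (y) (z) yz_nil => [|? ?] [|? ?].
  by rewrite edit_dist_nil addr0.
case: (last_step yz_neq_nil) => [[y1 [s [Ey s_neq_nil eE]]] | [z1 [z2 [Ez z2_neq_nil eE]]]
    | [y1 [b [z1 [c [Ey Ez eE]]]]]].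
- by subst y; apply: edit_dist_triangle_del_y.
- by subst z; apply: edit_dist_triangle_ins_z.
- by subst y z; apply: edit_dist_triangle_match_yz.
Qed.

Lemma lp_cost_refl x : E x x = 0.
Proof.
apply/eqP; rewrite eq_le lp_cost_ge0 andbT.
elim/last_ind: x => [|x a IH]; first by rewrite lp_cost_nill.
apply: le_trans (lp_cost_match_le d p_ge1 gamma_gp delta_gp x a x a) _.
by rewrite d_refl powR0 ?gt_eqF // addr0.
Qed.

Lemma edit_dist_eq0_size n x y : (size x + size y < n)%N -> D x y = 0 -> x = y.
Proof.
elim: n x y => [//|n IH] x y hn hD.
have hE : E x y = 0 by rewrite /lp_cost hD powR0 // gt_eqF.
have [xy_nil | xy_neq_nil] : x ++ y = [::] \/ x ++ y <> [::].
  by case: (x ++ y); [left | right].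
  by case: (x) (y) xy_nil => [|? ?] [|? ?].
case: (last_step xy_neq_nil) => [[x1 [x2 [_ x2_neq_nil eE]]] | [y1 [y2 [_ y2_neq_nil eE]]]
    | [x1 [a [y1 [b [Ex Ey eE]]]]]].
- exfalso; have := E_ge0 x1 y; have := delta_gt0 x2_neq_nil; move: eE; rewrite hE; lra.
- exfalso; have := E_ge0 x y1; have := gamma_gt0 y2_neq_nil; move: eE; rewrite hE; lra.
- subst x y; have := E_ge0 x1 y1; have := powR_ge0 (d a b) p.
  move: eE; rewrite hE => eE h1 h2.
  have e1 : E x1 y1 = 0 by lra.
  have /powR_eq0_eq0/d_sep -> : d a b `^ p = 0 by lra.
  rewrite (IH x1 y1) //; first by move: hn; rewrite !size_rcons; lia.
  by rewrite edit_distE // e1 powR0 // invr_neq0 // gt_eqF.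
Qed.

Lemma edit_dist_quasi_metric : quasi_metric D /\ separating D.
Proof.
have D_sep : separating D by move=> x y; apply: (@edit_dist_eq0_size (size x + size y).+1).
split=> //; split; [|split].
- exact: D_ge0.
- move=> x y; split; first by case=> /D_sep.
  by move=> ->; rewrite edit_distE // lp_cost_refl powR0 // invr_neq0 // gt_eqF.
- by move=> x y z; apply: (@edit_dist_triangle_size (size x + size y + size z).+1).
Qed.

End Triangle.

Theorem theorem3p10 (R : realType) (S : Type) (p : R) (d : S -> S -> R)
    (gamma delta : seq S -> R) :
  1 <= p ->
  quasi_metric d -> separating d ->
  CL_gap_penalty gamma -> CL_gap_penalty delta ->
  (forall a b : S, gamma [:: b] - gamma [:: a] <= d a b `^ p) ->
  (forall a b : S, delta [:: a] - delta [:: b] <= d a b `^ p) ->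
  let alpha := fun z => gamma z `^ p^-1 in
  let beta := fun z => delta z `^ p^-1 in
  quasi_metric (edit_dist p d alpha beta) /\
  separating (edit_dist p d alpha beta).
Proof.
move=> p_ge1 d_qm d_sep gamma_CL delta_CL gamma_d delta_d alpha beta.
exact: edit_dist_quasi_metric p_ge1 d_qm d_sep gamma_CL delta_CL gamma_d delta_d.
Qed.
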